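(* Let $(\omega_k)_k$ be formulas indexed by integers, and let $\chi,\psi$ be formulas. Suppose $(i_1,\dots,i_n)$, $(j_1,\dots,j_m)$, $(k_1,\dots,k_p)$ are strictly increasing sequences of integers with $\{k_1,\dots,k_p\}=\{i_1,\dots,i_n,j_1,\dots,j_m\}$, and that either $n=0$, or ($n>0$, $m>0$ and $i_n\le j_m$). If $\vdash_{\mathsf{BB'IW}}\omega_{i_1}\dots\omega_{i_n}\to(\chi\to\psi)$ and $\vdash_{\mathsf{BB'IW}}\omega_{j_1}\dots\omega_{j_m}\to\chi$, then $\vdash_{\mathsf{BB'IW}}\omega_{k_1}\dots\omega_{k_p}\to\psi$.
   Context: Formulas are built from propositional atoms with $\to$; $\phi_1\dots\phi_n\to\psi$ denotes $\phi_1\to(\dots(\phi_n\to\psi)\dots)$ if $n>0$ and $\psi$ if $n=0$. $\vdash_{\mathsf{BB'IW}}\phi$ means that $\phi$ is derivable by modus ponens from the axioms consisting of all instances of $(\chi\to\psi)\to((\phi\to\chi)\to(\phi\to\psi))$ (${\sf B}$), $(\phi\to\chi)\to((\chi\to\psi)\to(\phi\to\psi))$ (${\sf B'}$), $\phi\to\phi$ (${\sf I}$), $(\phi\to(\phi\to\chi))\to(\phi\to\chi)$ (${\sf W}$); equivalently, some combinator over the basis ${\sf B},{\sf B'},{\sf I},{\sf W}$ has type $\phi$. *)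

From Stdlib Require Import ZArith List Sorted.
Import ListNotations.

Inductive formula : Type :=
| Atom : nat -> formula
| Imp : formula -> formula -> formula.

Fixpoint imps (l : list formula) (psi : formula) : formula :=
  match l with
  | [] => psi
  | phi :: l' => Imp phi (imps l' psi)
  end.

Inductive BBIW : formula -> Prop :=
| ax_B : forall phi chi psi,
    BBIW (Imp (Imp chi psi) (Imp (Imp phi chi) (Imp phi psi)))
| ax_B' : forall phi chi psi,
    BBIW (Imp (Imp phi chi) (Imp (Imp chi psi) (Imp phi psi)))
| ax_I : forall phi, BBIW (Imp phi phi)
| ax_W : forall phi chi,
    BBIW (Imp (Imp phi (Imp phi chi)) (Imp phi chi))
| mp : forall phi psi, BBIW (Imp phi psi) -> BBIW phi -> BBIW psi.

Definition strictly_increasing (l : list Z) : Prop := Sorted Z.lt l.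

(* Induct on the merged list ks, peeling off its largest element k. The side
   condition forces k to be the last element of js, and k may or may not also
   be the last element of is. In both cases the two premises, with k removed,
   become premises X and Y with conclusion Z = omega k -> psi, where
   X -> Y -> Z and Y -> X -> Z are both derivable: by B and B' when k is not in
   is, and by S and its permuted form (derived from B, B' and W) when it is.
   Whichever of the two shorter pairs satisfies the side condition then gives
   the conclusion by induction. *)

From Stdlib Require Import ZArith List Sorted Lia.
Import ListNotations.

Lemma BBIW_trans a b c : BBIW (Imp a b) -> BBIW (Imp b c) -> BBIW (Imp a c).
Proof. intros hab hbc. exact (mp _ _ (mp _ _ (ax_B' a b c) hab) hbc). Qed.

Lemma BBIW_imps_imp l a b : BBIW (Imp a b) -> BBIW (Imp (imps l a) (imps l b)).
Proof.
  induction l as [|c l IH]; simpl; intro hab; [exact hab|].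
  exact (mp _ _ (ax_B c _ _) (IH hab)).
Qed.

Lemma BBIW_imps_mp l a b : BBIW (Imp a b) -> BBIW (imps l a) -> BBIW (imps l b).
Proof. intros hab ha. exact (mp _ _ (BBIW_imps_imp l a b hab) ha). Qed.

Lemma imps_app l1 l2 a : imps (l1 ++ l2) a = imps l1 (imps l2 a).
Proof. induction l1; simpl; congruence. Qed.

Lemma BBIW_S a b c : BBIW (Imp (Imp a (Imp b c)) (Imp (Imp a b) (Imp a c))).
Proof.
  pose proof (mp _ _ (ax_B' (Imp a b) (Imp (Imp b c) (Imp a c)) (Imp a (Imp a c)))
                (ax_B' a b c)) as permuted.
  pose proof (mp _ _ (ax_B (Imp a b) (Imp a (Imp a c)) (Imp a c)) (ax_W a c)) as contract.
  exact (BBIW_trans _ _ _ (BBIW_trans _ _ _ (ax_B' a (Imp b c) (Imp a c)) permuted) contract).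
Qed.

Lemma BBIW_S_swap a b c : BBIW (Imp (Imp a b) (Imp (Imp a (Imp b c)) (Imp a c))).
Proof.
  pose proof (mp _ _ (ax_B (Imp a (Imp b c)) (Imp a (Imp a c)) (Imp a c)) (ax_W a c))
    as contract.
  exact (BBIW_trans _ _ _ (BBIW_trans _ _ _ (ax_B' a b c) (ax_B a (Imp b c) (Imp a c)))
           contract).
Qed.

Notation increasing := (StronglySorted Z.lt).

Definition merges (is js ks : list Z) : Prop :=
  forall x, In x ks <-> In x is \/ In x js.

Definition dominated (is js : list Z) : Prop :=
  forall i, In i is -> exists j, In j js /\ (i <= j)%Z.

Lemma StronglySorted_snoc_inv l a :
  increasing (l ++ [a]) -> increasing l /\ (forall x, In x l -> (x < a)%Z).
Proof.
  induction l as [|b l IH]; simpl; intro hs.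
  - split; [constructor | intros x []].
  - apply StronglySorted_inv in hs as [hs hb]. rewrite Forall_forall in hb.
    destruct (IH hs) as [hl ha]. split.
    + constructor; [exact hl|]. rewrite Forall_forall.
      intros x hx; apply hb, in_or_app; auto.
    + intros x [<-|hx]; [apply hb, in_or_app; simpl; auto | auto].
Qed.

Lemma increasing_of_strictly_increasing l : strictly_increasing l -> increasing l.
Proof. apply Sorted_StronglySorted. intros x y z; lia. Qed.

Lemma le_last l x d : increasing l -> In x l -> (x <= last l d)%Z.
Proof.
  intros hs hx.
  destruct (exists_last (l := l)) as [L [a ->]]; [intros ->; destruct hx|].
  rewrite last_last. apply StronglySorted_snoc_inv in hs as [_ hlt].
  apply in_app_iff in hx as [hx|[->|[]]]; [specialize (hlt x hx)|]; lia.
Qed.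

Lemma last_of_upper_bound l k :
  increasing l -> In k l -> (forall x, In x l -> (x <= k)%Z) -> exists L, l = L ++ [k].
Proof.
  intros hs hk hub. pose proof (le_last l k 0%Z hs hk) as hk_last.
  destruct (exists_last (l := l)) as [L [a ->]]; [intros ->; destruct hk|].
  exists L. rewrite last_last in hk_last.
  assert (ha : In a (L ++ [a])) by (apply in_or_app; simpl; auto).
  specialize (hub a ha).
  replace k with a by lia. reflexivity.
Qed.

Lemma dominated_of_last is js :
  increasing is -> js <> [] -> (last is 0%Z <= last js 0%Z)%Z -> dominated is js.
Proof.
  intros sis hjs hlast i hi. exists (last js 0%Z). split.
  - destruct (exists_last hjs) as [J [j ->]].
    rewrite last_last. apply in_or_app; simpl; auto.
  - pose proof (le_last is i 0%Z sis hi). lia.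
Qed.

Lemma dominated_total is js :
  increasing is -> increasing js -> dominated is js \/ dominated js is.
Proof.
  intros sis sjs.
  destruct is as [|i is']; [left; intros ? []|].
  destruct js as [|j js']; [right; intros ? []|].
  destruct (Z.le_ge_cases (last (i :: is') 0%Z) (last (j :: js') 0%Z));
    [left | right]; apply dominated_of_last; auto; discriminate.
Qed.

Lemma merges_snoc_cancel is js ks k :
  ~ In k is -> ~ In k js -> ~ In k ks ->
  (forall x, In x (ks ++ [k]) <-> In x (is ++ [k]) \/ In x (js ++ [k])) ->
  merges is js ks.
Proof.
  intros his hjs hks hm x. specialize (hm x). rewrite !in_app_iff in hm. simpl in hm.
  destruct (Z.eq_dec x k) as [->|ne].
  { split; [intro; contradiction | intros [h|h]; contradiction]. }
  assert (k <> x) by congruence. firstorder.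
Qed.

Lemma merges_split_last is js ks k :
  increasing is -> increasing js -> increasing (ks ++ [k]) ->
  merges is js (ks ++ [k]) -> dominated is js ->
  exists J, js = J ++ [k] /\ increasing J /\
    ((exists I, is = I ++ [k] /\ increasing I /\ merges I J ks) \/ merges is J ks).
Proof.
  intros sis sjs sks hm hdom.
  apply StronglySorted_snoc_inv in sks as [_ hks].
  assert (hub : forall x, In x is \/ In x js -> (x <= k)%Z).
  { intros x hx. apply hm, in_app_iff in hx as [hx|[<-|[]]]; [specialize (hks x hx)|]; lia. }
  assert (hkjs : In k js).
  { destruct (proj1 (hm k)) as [hki|hkj]; [apply in_or_app; simpl; auto| |exact hkj].
    destruct (hdom k hki) as [j [hj hkj]]. specialize (hub j (or_intror hj)).
    replace k with j by lia. exact hj. }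
  destruct (last_of_upper_bound js k sjs hkjs (fun x hx => hub x (or_intror hx))) as [J ->].
  apply StronglySorted_snoc_inv in sjs as [sJ hJ].
  assert (hkJ : ~ In k J) by (intro h; specialize (hJ k h); lia).
  assert (hkks : ~ In k ks) by (intro h; specialize (hks k h); lia).
  exists J. split; [reflexivity | split; [exact sJ|]].
  destruct (in_dec Z.eq_dec k is) as [hki|hki].
  - left. destruct (last_of_upper_bound is k sis hki (fun x hx => hub x (or_introl hx)))
      as [I ->].
    apply StronglySorted_snoc_inv in sis as [sI hI].
    exists I. split; [reflexivity | split; [exact sI|]].
    apply merges_snoc_cancel with (k := k); auto. intro h; specialize (hI k h); lia.
  - right. apply merges_snoc_cancel with (k := k); auto.
    intro x. rewrite (hm x), !in_app_iff. simpl. firstorder.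
Qed.

Section Merge.

Variable omega : Z -> formula.

Definition merge_closed (ks : list Z) : Prop :=
  forall is js chi psi,
  increasing is -> increasing js -> merges is js ks -> dominated is js ->
  BBIW (imps (map omega is) (Imp chi psi)) ->
  BBIW (imps (map omega js) chi) ->
  BBIW (imps (map omega ks) psi).

Lemma merge_closed_nil : merge_closed [].
Proof.
  intros is js chi psi _ _ hm _ hmaj hmin.
  destruct is as [|i is]; [|destruct (proj2 (hm i) (or_introl (or_introl eq_refl)))].
  destruct js as [|j js]; [|destruct (proj2 (hm j) (or_intror (or_introl eq_refl)))].
  exact (mp _ _ hmaj hmin).
Qed.

Lemma merge_closed_combine ks is js X Y Z :
  merge_closed ks -> increasing is -> increasing js -> merges is js ks ->
  BBIW (imps (map omega is) X) -> BBIW (imps (map omega js) Y) ->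
  BBIW (Imp X (Imp Y Z)) -> BBIW (Imp Y (Imp X Z)) ->
  BBIW (imps (map omega ks) Z).
Proof.
  intros hks sis sjs hm hX hY hXYZ hYXZ.
  destruct (dominated_total is js sis sjs) as [hdom|hdom].
  - exact (hks is js Y Z sis sjs hm hdom (BBIW_imps_mp _ _ _ hXYZ hX) hY).
  - refine (hks js is X Z sjs sis _ hdom (BBIW_imps_mp _ _ _ hYXZ hY) hX).
    intro x. rewrite (hm x). firstorder.
Qed.

Lemma merge_closed_snoc ks k :
  increasing (ks ++ [k]) -> merge_closed ks -> merge_closed (ks ++ [k]).
Proof.
  intros sks hks is js chi psi sis sjs hm hdom hmaj hmin.
  destruct (merges_split_last is js ks k sis sjs sks hm hdom)
    as [J [-> [sJ [[I [-> [sI hm']]] | hm']]]].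
  all: rewrite map_app, imps_app in *; simpl in *.
  - exact (merge_closed_combine ks I J _ _ _ hks sI sJ hm' hmaj hmin
             (BBIW_S _ _ _) (BBIW_S_swap _ _ _)).
  - exact (merge_closed_combine ks is J _ _ _ hks sis sJ hm' hmaj hmin
             (ax_B _ _ _) (ax_B' _ _ _)).
Qed.

Lemma merge_closed_increasing ks : increasing ks -> merge_closed ks.
Proof.
  induction ks as [|k ks IH] using rev_ind; intro sks; [exact merge_closed_nil|].
  apply merge_closed_snoc; [exact sks|].
  apply IH, (StronglySorted_snoc_inv _ _ sks).
Qed.

End Merge.

Theorem lemma1p9 (omega : Z -> formula) (chi psi : formula)
  (is js ks : list Z) :
  strictly_increasing is ->
  strictly_increasing js ->
  strictly_increasing ks ->
  (forall x, In x ks <-> In x is \/ In x js) ->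
  (is = [] \/
   (is <> [] /\ js <> [] /\ (last is 0%Z <= last js 0%Z)%Z)) ->
  BBIW (imps (map omega is) (Imp chi psi)) ->
  BBIW (imps (map omega js) chi) ->
  BBIW (imps (map omega ks) psi).
Proof.
  intros inc_is inc_js inc_ks hm hcond hmaj hmin.
  apply increasing_of_strictly_increasing in inc_is, inc_js, inc_ks.
  assert (hdom : dominated is js).
  { destruct hcond as [-> | [_ [hjs hlast]]]; [intros ? []|].
    exact (dominated_of_last is js inc_is hjs hlast). }
  exact (merge_closed_increasing omega ks inc_ks is js chi psi inc_is inc_js hm hdom hmaj hmin).
Qed.
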